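(* Let $\mathcal{E}$ be a finite-dimensional real vector space with norm $\|\cdot\|_{\mathcal{E}}$, $X\subseteq\mathcal{E}$ a closed convex set, $h:X\to\mathbb{R}$ convex, and $d$ a prox-function on $X$ (as in the context) with subgradient selection $d'$ on $X^0$. Let $\bar x\in X^0$, $g\in\mathcal{E}^*$, $\gamma>0$, $\delta_{pc}>0$, $\delta_{pu}>0$, and let $\tilde x\in X^0$ be such that there exists $p\in\partial h(\tilde x)$ with $$\Big\langle g+\tfrac{1}{\gamma}\big[d'(\tilde x)-d'(\bar x)\big]+p,\;u-\tilde x\Big\rangle\ge-\delta_{pc}-\delta_{pu}\quad\forall u\in X.$$ Set $g_X:=\frac{1}{\gamma}(\bar x-\tilde x)$. Then $$\gamma\langle g,g_X\rangle\ge\gamma\|g_X\|_{\mathcal{E}}^2+\big(h(\tilde x)-h(\bar x)\big)-\delta_{pc}-\delta_{pu}.$$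
   Context: A prox-function $d$ on $X$ is a continuous convex function on $X$ which admits a selection of subgradients $d'(x)$ continuous in $x\in X^0$, where $X^0\subseteq X$ is the set of points at which $d'(x)$ exists, and which is $1$-strongly convex w.r.t. $\|\cdot\|_{\mathcal{E}}$: $d(y)-d(x)-\langle d'(x),y-x\rangle\ge\frac12\|y-x\|_{\mathcal{E}}^2$ for all $x\in X^0$, $y\in X$. $\langle g,x\rangle$ is the value of $g\in\mathcal{E}^*$ at $x\in\mathcal{E}$. *)

From HB Require Import structures.
From mathcomp Require Import all_boot all_order all_algebra.
From mathcomp Require Import all_classical all_reals all_analysis.
Set Implicit Arguments. Unset Strict Implicit. Unset Printing Implicit Defensive.
Import Order.TTheory GRing.Theory Num.Theory.
Import numFieldNormedType.Exports.
Local Open Scope classical_set_scope.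
Local Open Scope ring_scope.

(* The finite-dimensional real space E is modelled as 'rV[R]_n; its dual E^*
   is identified with 'rV[R]_n via the standard (nondegenerate) pairing. *)
Definition pairing (R : realType) (n : nat) (g x : 'rV[R]_n) : R :=
  \sum_(i < n) g ord0 i * x ord0 i.

Definition is_norm (R : realType) (n : nat) (N : 'rV[R]_n -> R) : Prop :=
  [/\ forall x y, N (x + y) <= N x + N y,
      forall (a : R) x, N (a *: x) = `|a| * N x &
      forall x, N x = 0 -> x = 0].

Definition is_convex_set (R : realType) (n : nat) (X : set 'rV[R]_n) : Prop :=
  forall x y (t : R), X x -> X y -> 0 <= t <= 1 ->
    X (t *: x + (1 - t) *: y).

Definition convex_on (R : realType) (n : nat) (X : set 'rV[R]_n)
  (f : 'rV[R]_n -> R) : Prop :=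
  forall x y (t : R), X x -> X y -> 0 <= t <= 1 ->
    f (t *: x + (1 - t) *: y) <= t * f x + (1 - t) * f y.

Definition subgrad (R : realType) (n : nat) (X : set 'rV[R]_n)
  (f : 'rV[R]_n -> R) (x p : 'rV[R]_n) : Prop :=
  X x /\ forall y, X y -> f y >= f x + pairing p (y - x).

Definition X0 (R : realType) (n : nat) (X : set 'rV[R]_n)
  (d : 'rV[R]_n -> R) : set 'rV[R]_n :=
  [set x | exists p, subgrad X d x p].

Definition prox_function (R : realType) (n : nat) (N : 'rV[R]_n -> R)
  (X : set 'rV[R]_n) (d : 'rV[R]_n -> R) (d' : 'rV[R]_n -> 'rV[R]_n) : Prop :=
  [/\ {within X, continuous d},
      convex_on X d,
      (forall x, X0 X d x -> subgrad X d x (d' x)),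
      {within X0 X d, continuous d'} &
      (forall x y, X0 X d x -> X y ->
         d y - d x - pairing (d' x) (y - x) >= 2^-1 * N (y - x) ^+ 2)].

From HB Require Import structures.
From mathcomp Require Import all_boot all_order all_algebra.
From mathcomp Require Import all_classical all_reals all_analysis.
From mathcomp Require Import lra.
Set Implicit Arguments. Unset Strict Implicit. Unset Printing Implicit Defensive.
Import Order.TTheory GRing.Theory Num.Theory.
Import numFieldNormedType.Exports.
Local Open Scope classical_set_scope.
Local Open Scope ring_scope.

(* Adding the two strong-convexity inequalities of d at xbar and at xt shows
   that d' is strongly monotone: <d' xbar - d' xt, xbar - xt> >= N (xbar - xt)^2.
   Testing the approximate optimality condition at u = xbar and bounding
   <p, xbar - xt> by h xbar - h xt (p is a subgradient of h at xt) leaves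
   <g, xbar - xt> >= N (xbar - xt)^2 / gamma + h xt - h xbar - dpc - dpu,
   which is the claim after rescaling by gamma. *)

Section Pairing.
Variables (R : realType) (n : nat).
Implicit Types (a b x y : 'rV[R]_n) (c : R).

Lemma pairingDl a b x : pairing (a + b) x = pairing a x + pairing b x.
Proof. by rewrite /pairing -big_split; apply: eq_bigr => i _; rewrite mxE mulrDl. Qed.

Lemma pairingZl c a x : pairing (c *: a) x = c * pairing a x.
Proof. by rewrite /pairing mulr_sumr; apply: eq_bigr => i _; rewrite mxE mulrA. Qed.

Lemma pairingZr c a x : pairing a (c *: x) = c * pairing a x.
Proof. by rewrite /pairing mulr_sumr; apply: eq_bigr => i _; rewrite mxE mulrCA. Qed.

Lemma pairingNl a x : pairing (- a) x = - pairing a x.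
Proof. by rewrite -scaleN1r pairingZl mulN1r. Qed.

Lemma pairingNr a x : pairing a (- x) = - pairing a x.
Proof. by rewrite -scaleN1r pairingZr mulN1r. Qed.

Lemma pairingBl a b x : pairing (a - b) x = pairing a x - pairing b x.
Proof. by rewrite pairingDl pairingNl. Qed.

End Pairing.

Section ConvexAnalysis.
Variables (R : realType) (n : nat) (N : 'rV[R]_n -> R) (X : set 'rV[R]_n).

Lemma is_normN : is_norm N -> forall x, N (- x) = N x.
Proof. by case=> _ NZ _ x; rewrite -scaleN1r NZ normrN normr1 mul1r. Qed.

Lemma is_normZ : is_norm N -> forall (c : R) x, N (c *: x) = `|c| * N x.
Proof. by case. Qed.

Lemma X0_subset (d : 'rV[R]_n -> R) x : X0 X d x -> X x.
Proof. by case=> p []. Qed.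

Lemma subgrad_pairing_le (f : 'rV[R]_n -> R) x p y :
  subgrad X f x p -> X y -> pairing p (y - x) <= f y - f x.
Proof. by move=> [_ fp] /fp; rewrite lerBrDl. Qed.

Lemma prox_subgrad_strongly_monotone (d : 'rV[R]_n -> R) d' x y :
  is_norm N -> prox_function N X d d' -> X0 X d x -> X0 X d y ->
  N (x - y) ^+ 2 <= pairing (d' x - d' y) (x - y).
Proof.
move=> normN [_ _ _ _ strong] X0x X0y.
have sxy := strong _ _ X0x (X0_subset X0y).
have syx := strong _ _ X0y (X0_subset X0x).
rewrite -opprB pairingNr is_normN // in sxy.
rewrite pairingBl; lra.
Qed.

End ConvexAnalysis.

Theorem lemma2 (R : realType) (n : nat) (N : 'rV[R]_n -> R)
  (X : set 'rV[R]_n) (h d : 'rV[R]_n -> R) (d' : 'rV[R]_n -> 'rV[R]_n)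
  (xbar xt g : 'rV[R]_n) (gamma dpc dpu : R) :
  is_norm N -> closed X -> is_convex_set X -> convex_on X h ->
  prox_function N X d d' ->
  X0 X d xbar -> 0 < gamma -> 0 < dpc -> 0 < dpu -> X0 X d xt ->
  (exists p, subgrad X h xt p /\
     forall u, X u ->
       pairing (g + gamma^-1 *: (d' xt - d' xbar) + p) (u - xt) >= - dpc - dpu) ->
  gamma * pairing g (gamma^-1 *: (xbar - xt)) >=
    gamma * N (gamma^-1 *: (xbar - xt)) ^+ 2 + (h xt - h xbar) - dpc - dpu.
Proof.
move=> normN _ _ _ prox X0xbar gamma_gt0 _ _ X0xt [p [hp opt]].
have Xxbar := X0_subset X0xbar.
have opt_xbar := opt _ Xxbar.
have hp_xbar := subgrad_pairing_le hp Xxbar.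
have mono := prox_subgrad_strongly_monotone normN prox X0xbar X0xt.
have inv_gt0 : 0 < gamma^-1 by rewrite invr_gt0.
have {}mono := ler_wpM2l (ltW inv_gt0) mono.
rewrite -[d' xt - d' xbar]opprB scalerN !pairingDl pairingNl pairingZl in opt_xbar.
rewrite pairingZr is_normZ // gtr0_norm // exprMn expr2 -mulrA !mulVKf ?gt_eqF //.
move: opt_xbar hp_xbar mono.
(* lra treats the products with gamma^-1 poorly; make them opaque atoms. *)
set aM := gamma^-1 * N (xbar - xt) ^+ 2.
set aD := gamma^-1 * pairing (d' xbar - d' xt) (xbar - xt).
clearbody aM aD; lra.
Qed.
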